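(* Given positive integers $n$ and $g$, there exists an integer $d_0$, depending only on $n$ and $g$, such that for every integer $d>d_0$ and every subgroup $H\subset(\mathbb{Z}/d\mathbb{Z})^\times$ of index $2g$, every coset of $H$ in $(\mathbb{Z}/d\mathbb{Z})^\times$ contains an element whose least nonnegative residue modulo $d$ lies in the open interval $(0,d/n)$. *)

From mathcomp Require Import all_boot all_order all_algebra all_fingroup.
Set Implicit Arguments. Unset Strict Implicit. Unset Printing Implicit Defensive.

(* Least nonnegative residue of a unit u of 'Z_d (valid for d >= 2, where
   'Z_d is the ordinal type 'I_d). *)
Definition unit_residue (d : nat) (u : {unit 'Z_d}) : nat := nat_of_ord (val u).

From mathcomp Require Import all_boot all_order all_algebra all_fingroup all_field.
From mathcomp Require Import zify ring.
Set Implicit Arguments. Unset Strict Implicit. Unset Printing Implicit Defensive.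
Import Order.TTheory GRing.Theory Num.Theory.

(* Put N = 128 n^2 m^2 with m = 2g, L = gcd(d, N!) and T = kL with
   d/(4n) <= T <= d/(2n).  Finite Fourier analysis on Z/dZ counts the triples
   (u, j1, j2) with u in the coset Hc, j1, j2 < T and rho(u) = j1 + j2, where
   rho(u) is the least residue of u.  The frequencies that are multiples of d/L
   contribute exactly |H| T^2.  For any other frequency a, d' = d/gcd(a, d) does
   not divide N!, so it has a prime-power factor larger than N, whence
   N d' <= 8 phi(d')^2.  Averaging over H and Parseval bound the coset sum at a
   by sqrt(d') |H ∩ ker(Z/d -> Z/d')| <= sqrt(d') m |H| / phi(d'), which is at
   most |H| T / d.  Hence the error terms cannot cancel the main term, and some
   u in Hc has 0 < rho(u) < 2T <= d/n. *)

Lemma totient_sq_bound s :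
  0 < s -> s <= 2 * totient s ^ 2 /\ (odd s -> s <= totient s ^ 2).
Proof.
elim/ltn_ind: s => s IH s0.
have [s_le1 | s_gt1] := leqP s 1; first by have -> : s = 1 by lia.
have pp := pdiv_prime s_gt1; set p := pdiv s in pp.
have [m cpm sE] := pfactor_coprime pp s0.
set k := logn p s in sE.
have k0 : 0 < k by rewrite logn_gt0 mem_primes pp s0 pdiv_dvd.
have p1 := prime_gt1 pp.
have m0 : 0 < m by move: s0; rewrite sE muln_gt0 => /andP[].
have ms : m < s.
  rewrite sE -[X in X < _]muln1 ltn_pmul2l // (leq_trans p1) //.
  by rewrite -[X in X <= _]expn1 leq_pexp2l // ltnW.
have [IH1 IH2] := IH m ms m0.
have tE : totient s = totient m * (p.-1 * p ^ k.-1).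
  by rewrite sE totient_coprime ?totient_pfactor // coprime_sym coprimeXl.
have pkE : p ^ k = p * p ^ k.-1 by rewrite -expnS prednK.
rewrite tE sE pkE expnMn; set t := p ^ k.-1; set a := totient m in IH1 IH2 *.
have t_le_sq : t <= t ^ 2 by rewrite expnS expn1 leq_pmulr // expn_gt0 (ltnW p1).
have [p2 | p2] := eqVneq p 2.
  have om : odd m by rewrite -coprime2n -p2.
  split; last by rewrite !oddM p2 andbF.
  rewrite p2 /= mul1n mulnCA leq_mul2l /=.
  exact: leq_mul (IH2 om) t_le_sq.
have p_le_sq : p <= p.-1 ^ 2.
  have p3 : 2 < p by move: p1 p2; lia.
  by move: p3; rewrite -(prednK (ltnW p1)) /=; set r := p.-1; nia.
have ptt : p * t <= (p.-1 * t) ^ 2 by rewrite expnMn leq_mul.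
split; first by rewrite [X in _ <= X]mulnA leq_mul.
by rewrite !oddM => /andP[/IH2 h _]; rewrite leq_mul.
Qed.

Lemma part_totient_sq_bound d p :
  0 < d -> p \in \pi(d) -> d`_p * d <= 8 * totient d ^ 2.
Proof.
move=> d0 pd; have pp : prime p by move: pd; rewrite mem_primes => /andP[].
have k0 : 0 < logn p d by rewrite logn_gt0.
have hq : d`_p <= 2 * totient d`_p.
  rewrite p_part totient_pfactor // -{1}(prednK k0) expnS mulnA leq_mul2r.
  by apply/orP; right; have := prime_gt1 pp; lia.
have [hr _] := totient_sq_bound (part_gt0 p^' d).
rewrite -{2 3}(partnC p d0) totient_coprime ?coprime_partC //.
have := leq_mul (leq_mul hq hq) hr.
set q := d`_p; set r := d`_p^'; set a := totient q; set b := totient r.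
rewrite expnMn; lia.
Qed.

Lemma prime_power_part_gt N d :
  0 < d -> ~~ (d %| N`!) -> exists2 p, p \in \pi(d) & N < d`_p.
Proof.
move=> d0 ndvd; have [p pd np] : exists2 p, p \in primes d & ~~ (d`_p %| N`!).
  apply/allPn; apply: contra ndvd => /allP h.
  by apply/dvdn_partP => // q /h.
by exists p => //; rewrite ltnNge; apply: contra np => hp; apply: dvdn_fact; rewrite part_gt0 hp.
Qed.

Lemma coprime_lift d d' y : 0 < d -> d' %| d -> coprime y d' ->
  exists2 x, coprime x d & x = y %[mod d'].
Proof.
move=> d0 dvd_d'd cyd'; have d'0 := dvdn_gt0 d0 dvd_d'd.
pose pi := [pred p | ~~ (p %| y)]; set t := d`_pi.
have t0 : 0 < t := part_gt0 pi d.
exists (y + d' * t); last by rewrite mulnC addnC modnMDl.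
have x0 : 0 < y + d' * t by rewrite addn_gt0 muln_gt0 d'0 t0 orbT.
rewrite coprime_has_primes //; apply/hasPn => p.
rewrite !mem_primes x0 d0 /= => /andP[pp pd].
have pt : (p %| t) = ~~ (p %| y).
  by have := pi_of_part pi d0 p; rewrite !inE /= !mem_primes pp t0 d0 pd /= => ->.
rewrite pp /=.
have [py | npy] := boolP (p %| y).
  rewrite dvdn_addr // Euclid_dvdM // pt py orbF.
  by rewrite -prime_coprime // (coprime_dvdl py) // coprime_sym.
by rewrite dvdn_addl // dvdn_mull // pt.
Qed.

Lemma dvdn_div_gcd_dvd a d N :
  0 < d -> d %/ gcdn a d %| N -> d %/ gcdn d N %| a.
Proof.
move=> d0; set e := gcdn a d => dvd_d'N.
have e0 : 0 < e by rewrite gcdn_gt0 d0 orbT.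
have dE : d %/ e * e = d by rewrite divnK // dvdn_gcdr.
have d'L : d %/ e %| gcdn d N by rewrite dvdn_gcd dvd_d'N dvdn_div // dvdn_gcdr.
have [s Ls] := dvdnP d'L.
have d'0 : 0 < d %/ e by rewrite divn_gt0 // dvdn_leq // dvdn_gcdr.
have LE : d %/ gcdn d N * gcdn d N = d by rewrite divnK // dvdn_gcdl.
have : d %/ gcdn d N %| e.
  apply/dvdnP; exists s; apply/eqP; rewrite -(eqn_pmul2l d'0) dE -{1}LE Ls.
  by apply/eqP; lia.
by move/dvdn_trans; apply; rewrite dvdn_gcdl.
Qed.

Lemma exists_scale_between n L d : 0 < n -> 0 < L -> 2 * n * L <= d ->
  exists2 k, 0 < k & 2 * n * (k * L) <= d <= 4 * n * (k * L).
Proof.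
move=> n0 L0 nLd; set X := 2 * n * L; set k := d %/ X.
have X0 : 0 < X by rewrite !muln_gt0 n0 L0.
have k0 : 0 < k by rewrite divn_gt0.
have k_lo : k * X <= d by rewrite leq_trunc_div.
have k_hi : d < k.+1 * X by rewrite ltn_ceil.
exists k => //; apply/andP; split; first by move: k_lo; rewrite /X; lia.
by have := leq_pmull X k0; move: k_hi; rewrite mulSn /X; lia.
Qed.

Lemma coset_exp_sum_small_arith n m T d d' h phi Hn q :
  0 < m -> h * phi <= m * Hn -> 128 * n ^ 2 * m ^ 2 < q ->
  q * d' <= 8 * phi ^ 2 -> d <= 4 * n * T ->
  d' * h ^ 2 * d ^ 2 <= (Hn * T) ^ 2.
Proof.
move=> m0 hphi qB qd dT.
have d'phi : 16 * n ^ 2 * m ^ 2 * d' <= phi ^ 2.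
  have : 128 * n ^ 2 * m ^ 2 * d' <= 8 * phi ^ 2.
    by apply: leq_trans qd; rewrite leq_mul2r ltnW ?orbT.
  nia.
have d'h : 16 * n ^ 2 * (d' * h ^ 2) <= Hn ^ 2.
  rewrite -(@leq_pmul2r (m ^ 2)) ?expn_gt0 ?m0 //.
  have := leq_mul d'phi (leqnn (h ^ 2)); have := leq_mul hphi hphi; nia.
have := leq_mul dT dT; have := leq_mul d'h (leqnn (T ^ 2)); nia.
Qed.

Section UnitResidue.
Variable d : nat.
Hypothesis d_gt1 : 1 < d.
Local Notation rho := (@unit_residue d).

Lemma unit_residueM (u v : {unit 'Z_d}) : rho (u * v)%g = (rho u * rho v) %% d.
Proof.
rewrite /unit_residue FinRing.val_unitM -[X in (X * _)%R]natr_Zp.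
by rewrite -[X in (_ * X)%R]natr_Zp -natrM val_Zp_nat.
Qed.

Lemma unit_residue_lt (u : {unit 'Z_d}) : rho u < d.
Proof. by rewrite /unit_residue -[X in _ < X]Zp_cast. Qed.

Lemma unit_residue_gt0 (u : {unit 'Z_d}) : 0 < rho u.
Proof.
rewrite lt0n; apply/negP => /eqP rho0; have := valP u.
have -> : val u = 0%R by apply: val_inj; rewrite /= -rho0.
by rewrite unitr0.
Qed.

Lemma unit_residue1 : rho 1%g = 1.
Proof. by rewrite /unit_residue /= modn_small. Qed.

Lemma unit_residue_onto x : coprime d x -> exists u : {unit 'Z_d}, rho u = x %% d.
Proof.
move=> cx; have ux : ((x%:R)%R : 'Z_d) \is a GRing.unit by rewrite unitZpE.
by exists (FinRing.Unit ux); rewrite /unit_residue /= val_Zp_nat.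
Qed.

End UnitResidue.

Section RootsOfUnity.
Local Open Scope ring_scope.
Variables (q : nat) (w : algC).
Hypothesis w_prim : q.-primitive_root w.

Lemma prim_root_conj : w^* = w ^+ q.-1.
Proof.
have q0 := prim_order_gt0 w_prim; have wq := prim_expr_order w_prim.
have w0 : w != 0 by apply: contra_eqN wq => /eqP->; rewrite expr0n gtn_eqF // eq_sym oner_eq0.
have nw : `|w| = 1.
  by apply/eqP; rewrite -(pexpr_eq1 q0) ?normr_ge0 // -normrX wq normr1.
have wcw : w^* * w = 1 by rewrite -normCKC nw expr1n.
by rewrite -[w^*]mulr1 -wq -(prednK q0) exprS mulrA wcw mul1r.
Qed.

Lemma prim_root_orthogonality x y :
  \sum_(b < q) w ^+ (b * x) * (w ^+ (b * y))^* = (q * (x == y %[mod q]))%:R.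
Proof.
have q0 := prim_order_gt0 w_prim; have wq := prim_expr_order w_prim.
set z := w ^+ (x + q.-1 * y).
have -> : \sum_(b < q) w ^+ (b * x) * (w ^+ (b * y))^* = \sum_(b < q) z ^+ b.
  apply: eq_bigr => b _; rewrite rmorphXn /= prim_root_conj -exprM -exprD /z -exprM.
  by congr (_ ^+ _); lia.
have z1E : (z == 1) = (x == y %[mod q]).
  rewrite /z -(prim_order_dvd w_prim) /dvdn -(eqn_modDr (q.-1 * y) x y).
  have -> : (y + q.-1 * y = q * y)%N by rewrite -{1}[y]mul1n -mulnDl add1n prednK.
  by rewrite modnMr.
have [z1 | zn1] := eqVneq z 1.
  by rewrite -z1E z1 eqxx muln1 (eq_bigr (fun _ => 1)) ?sumr_const ?card_ord // => i; rewrite expr1n.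
rewrite -z1E (negbTE zn1) muln0.
have zq : z ^+ q = 1 by rewrite /z -exprM mulnC exprM wq expr1n.
have : (z - 1) * \sum_(i < q) z ^+ i = 0 by rewrite -subrX1 zq subrr.
by move/eqP; rewrite mulf_eq0 subr_eq0 (negbTE zn1) => /eqP.
Qed.

Lemma prim_root_parseval (f : nat -> algC) :
  \sum_(b < q) `|\sum_(y < q) f y * w ^+ (b * y)| ^+ 2
   = q%:R * \sum_(y < q) `|f y| ^+ 2.
Proof.
transitivity (\sum_(b < q) \sum_(y < q) \sum_(y' < q)
   (f y * (f y')^*) * (w ^+ (b * y) * (w ^+ (b * y'))^*)).
  apply: eq_bigr => b _; rewrite normCK rmorph_sum /= big_distrl /=.
  apply: eq_bigr => y _; rewrite big_distrr /=; apply: eq_bigr => y' _.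
  by rewrite rmorphM /= mulrACA.
rewrite exchange_big /= big_distrr /=; apply: eq_bigr => y _.
rewrite exchange_big /= (bigD1 y) //= [X in _ + X]big1 ?addr0.
  by rewrite -big_distrr /= prim_root_orthogonality eqxx muln1 normCK mulrC.
move=> y' ny'; rewrite -big_distrr /= prim_root_orthogonality !modn_small //.
have/negbTE-> : (y : nat) != y' by rewrite eq_sym.
by rewrite muln0 mulr0.
Qed.

End RootsOfUnity.

Lemma sum_by_fibres (T : finType) (A : {set T}) (f : T -> nat) q (g : nat -> algC) :
  (forall u, f u < q) ->
  (\sum_(u in A) g (f u) = \sum_(b < q) #|[set u in A | f u == b]|%:R * g b)%R.
Proof.
move=> fq; rewrite (partition_big (fun u => Ordinal (fq u)) xpredT) //=.
apply: eq_bigr => b _; rewrite mulr_natl -sumr_const.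
by apply: eq_big => [u | u /andP[_ /eqP <-]]; rewrite ?inE.
Qed.

Section CosetSums.
Variables (d : nat) (H : {group {unit 'Z_d}}) (d' : nat).
Hypotheses (d_gt1 : 1 < d) (d'_gt0 : 0 < d') (d'_dvd : d' %| d).
Local Notation rho := (@unit_residue d).

Definition ker_mod : {set {unit 'Z_d}} := [set u | rho u == 1 %[mod d']].

Definition coset_fibre (c : {unit 'Z_d}) (b : nat) : {set {unit 'Z_d}} :=
  [set u in (H :* c)%g | rho u %% d' == b].

Lemma unit_residueM_mod (u v : {unit 'Z_d}) : rho (u * v)%g = rho u * rho v %[mod d'].
Proof. by rewrite unit_residueM // (modn_dvdm _ d'_dvd). Qed.

Lemma card_coset_fibre c b : #|coset_fibre c b| <= #|H :&: ker_mod|.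
Proof.
have [-> | [u0 u0_in]] := set_0Vmem (coset_fibre c b); first by rewrite cards0.
rewrite -(card_imset _ (mulIg u0^-1)%g); apply: subset_leq_card.
apply/subsetP => _ /imsetP[u u_in ->].
move: u_in u0_in; rewrite !inE => /andP[/rcoset_eqP Hu /eqP ub] /andP[/rcoset_eqP Hu0 /eqP u0b].
rewrite -mem_rcoset; apply/andP; split; first by apply/rcoset_eqP; rewrite Hu Hu0.
rewrite unit_residueM_mod -modnMml ub -u0b modnMml -unit_residueM_mod.
by rewrite mulgV unit_residue1.
Qed.

Lemma totient_mul_card_ker_mod : totient d' * #|ker_mod| <= totient d.
Proof.
have d_gt0 := ltnW d_gt1.
rewrite -(card_units_Zp d_gt0) totient_count_coprime big_distrl /=.
have -> : #|units_Zp d| = \sum_(0 <= y < d') #|[set u : {unit 'Z_d} | rho u %% d' == y]|.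
  rewrite cardsT -sum1_card big_mkord.
  rewrite (partition_big (fun u => Ordinal (ltn_pmod (rho u) d'_gt0)) xpredT) //=.
  by apply: eq_bigr => y _; rewrite -sum1_card; apply: eq_bigl => u; rewrite inE.
rewrite big_nat [X in _ <= X]big_nat; apply: leq_sum => y /andP[_ y_lt].
have [cy | _] := boolP (coprime d' y); last by rewrite mul0n.
have [x cx xy] := coprime_lift d_gt0 d'_dvd (etrans (coprime_sym _ _) cy).
have [u0 u0x] := unit_residue_onto d_gt1 (etrans (coprime_sym _ _) cx).
rewrite mul1n -(card_imset ker_mod (mulgI u0)); apply: subset_leq_card.
apply/subsetP => _ /imsetP[k /[!inE] /eqP k1 ->].
rewrite unit_residueM_mod -modnMmr k1 modnMmr muln1 u0x.
by rewrite (modn_dvdm _ d'_dvd) xy modn_small.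
Qed.

Local Open Scope ring_scope.
Variable w : algC.
Hypothesis w_prim : d'.-primitive_root w.

Definition coset_exp_sum (c : {unit 'Z_d}) (b : nat) : algC :=
  \sum_(u in (H :* c)%g) w ^+ (b * rho u).

Lemma expr_prim_root_mod n : w ^+ (n %% d') = w ^+ n.
Proof. exact: expr_mod (prim_expr_order w_prim). Qed.

Lemma coset_exp_sum_modr c b : coset_exp_sum c (b %% d') = coset_exp_sum c b.
Proof.
by apply: eq_bigr => u _; rewrite -expr_prim_root_mod modnMml expr_prim_root_mod.
Qed.

Lemma coset_exp_sum_unitl c h b :
  h \in H -> coset_exp_sum c (rho h * b) = coset_exp_sum c b.
Proof.
move=> hH; rewrite /coset_exp_sum [in RHS](reindex_inj (mulgI h)) /=.
apply: eq_big => [u | u _]; first by rewrite !mem_rcoset -mulgA (groupMl _ hH).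
rewrite -[in RHS]expr_prim_root_mod -modnMmr unit_residueM_mod modnMmr.
rewrite expr_prim_root_mod.
by congr (_ ^+ _); rewrite mulnCA mulnA.
Qed.

Lemma coset_exp_sum_fibres c b :
  coset_exp_sum c b = \sum_(y < d') #|coset_fibre c y|%:R * w ^+ (b * y).
Proof.
rewrite /coset_exp_sum (eq_bigr (fun u => w ^+ (b * (rho u %% d'))%N)); last first.
  by move=> u _; rewrite -[in RHS]expr_prim_root_mod modnMmr expr_prim_root_mod.
by rewrite (sum_by_fibres (q := d') _ (fun y => w ^+ (b * y))) // => u; rewrite ltn_pmod.
Qed.

Lemma sum_card_coset_fibres c : \sum_(y < d') #|coset_fibre c y|%:R = #|H|%:R :> algC.
Proof.
have := sum_by_fibres (f := fun u => (rho u %% d')%N) (q := d') (H :* c)%g (fun _ => 1 : algC).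
rewrite sumr_const card_rcoset => ->; last by move=> u; rewrite ltn_pmod.
by apply: eq_bigr => y _; rewrite mulr1.
Qed.

(* Averaging over the frequencies [rho h], h in H, which all give the same sum,
   and then applying Parseval. *)
Lemma coset_exp_sum_bound c :
  `|coset_exp_sum c 1| ^+ 2 <= (d' * #|H :&: ker_mod| ^ 2)%:R.
Proof.
set k := #|H :&: ker_mod|; set S := coset_exp_sum c.
have H_gt0 : (0 < #|H|)%N := cardG_gt0 H.
have average : #|H|%:R * `|S 1| ^+ 2 = \sum_(h in H) `|S (rho h %% d')%N| ^+ 2.
  rewrite (eq_bigr (fun _ => `|S 1| ^+ 2)) ?sumr_const ?mulr_natl // => h hH.
  by rewrite /S coset_exp_sum_modr -(muln1 (rho h)) coset_exp_sum_unitl.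
have by_fibres : \sum_(h in H) `|S (rho h %% d')%N| ^+ 2 =
    \sum_(b < d') #|coset_fibre 1 b|%:R * `|S b| ^+ 2.
  rewrite (sum_by_fibres (q := d') _ (fun b => `|S b| ^+ 2)) => [|u]; last by rewrite ltn_pmod.
  by apply: eq_bigr => b _; rewrite /coset_fibre rcoset1.
have fibres_le : \sum_(b < d') #|coset_fibre 1 b|%:R * `|S b| ^+ 2
    <= k%:R * \sum_(b < d') `|S b| ^+ 2.
  rewrite mulr_sumr; apply: ler_sum => b _; apply: ler_wpM2r; first exact: exprn_ge0.
  by rewrite ler_nat card_coset_fibre.
have parseval : \sum_(b < d') `|S b| ^+ 2 =
    d'%:R * \sum_(y < d') `|#|coset_fibre c y|%:R| ^+ 2.
  rewrite -(prim_root_parseval w_prim (fun y => #|coset_fibre c y|%:R)).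
  by apply: eq_bigr => b _; rewrite /S coset_exp_sum_fibres.
have sq_fibres_le : \sum_(y < d') `|#|coset_fibre c y|%:R : algC| ^+ 2 <= k%:R * #|H|%:R.
  rewrite -(sum_card_coset_fibres c) mulr_sumr; apply: ler_sum => y _.
  by rewrite normr_nat expr2 -!natrM ler_nat leq_mul2r card_coset_fibre orbT.
have : #|H|%:R * `|S 1| ^+ 2 <= #|H|%:R * (d' * k ^ 2)%:R.
  rewrite average by_fibres; apply: (le_trans fibres_le); rewrite parseval.
  rewrite [X in _ <= X](_ : _ = k%:R * (d'%:R * (k%:R * #|H|%:R))).
    by rewrite ler_wpM2l ?ler0n // ler_wpM2l ?ler0n.
  by rewrite natrM natrX; ring.
by rewrite ler_pM2l ?ltr0n.
Qed.

End CosetSums.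

Lemma sum_ord_eq_mod_shift L x y : 0 < L -> \sum_(j < L) (x == y + j %[mod L]) = 1.
Proof.
move=> L0; set r := (x + (L - y %% L)) %% L; have rL : r < L by rewrite ltn_pmod.
have yc : y + (L - y %% L) = (y %/ L).+1 * L.
  rewrite {1}(divn_eq y L) -addnA subnKC; last by rewrite ltnW // ltn_pmod.
  by rewrite mulSn addnC.
have E (j : 'I_L) : (x == y + j %[mod L]) = (j == Ordinal rL).
  rewrite -(eqn_modDr (L - y %% L)) -addnA (addnC j) addnA yc modnMDl.
  by rewrite (modn_small (ltn_ord j)) eq_sym.
rewrite (eq_bigr (fun j => nat_of_bool (j == Ordinal rL))) => [|j _]; last by rewrite E.
by rewrite (bigD1 (Ordinal rL)) // eqxx big1 ?addn0 // => j /negbTE ->.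
Qed.

Lemma sum_eq_mod_shift L k x y : 0 < L -> \sum_(j < k * L) (x == y + j %[mod L]) = k.
Proof.
move=> L0; elim: k => [|k IH]; first by rewrite mul0n big_ord0.
rewrite mulSnr big_split_ord IH -addn1; congr (_ + _).
rewrite -(sum_ord_eq_mod_shift x y L0); apply: eq_bigr => j _.
by rewrite /= (addnCA y) modnMDl.
Qed.

Lemma sum_nat_dvd (f : nat -> algC) D L : 0 < D ->
  (\sum_(0 <= a < (D * L)%N | (D %| a)%N) f a = \sum_(0 <= b < L) f (D * b)%N)%R.
Proof.
move=> D0; elim: L => [|L IH]; first by rewrite muln0 !big_geq.
rewrite mulnS addnC (@big_cat_nat _ _ _ (D * L)) ?leq_addr //= IH.
rewrite big_nat_recr //=; congr (_ + _)%R.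
rewrite big_ltn_cond; last by lia.
rewrite (dvdn_mulr L (dvdnn D)) big_nat_cond big1 ?addr0 //.
move=> a /andP[/andP[ha1 ha2] hd].
have : D %| a - D * L.
  by rewrite -(dvdn_addr _ (dvdn_mulr L (dvdnn D))) subnKC // ltnW.
by rewrite gtnNdvd //; lia.
Qed.

Section CountingSums.
Variables (d : nat) (H : {group {unit 'Z_d}}) (c : {unit 'Z_d}) (L k : nat).
Hypotheses (d_gt1 : 1 < d) (L_gt0 : 0 < L) (L_dvd : L %| d) (k_gt0 : 0 < k).
Hypothesis T_le : 2 * (k * L) <= d.
Local Notation rho := (@unit_residue d).
Local Notation T := (k * L).
Local Open Scope ring_scope.
Variable z : algC.
Hypothesis z_prim : d.-primitive_root z.
Local Notation S := (coset_exp_sum H z c).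

Definition interval_exp_sum (a : nat) : algC := \sum_(j < T) z ^+ (a * j).
Local Notation J := interval_exp_sum.

Definition count_sums : nat :=
  (\sum_(u in (H :* c)%g) \sum_(j1 < T) \sum_(j2 < T) (rho u == j1 + j2))%N.

Lemma coset_interval_exp_sum_expand a : S a * (J a)^* ^+ 2 =
  \sum_(u in (H :* c)%g) \sum_(j1 < T) \sum_(j2 < T)
     z ^+ (a * rho u) * (z ^+ (a * (j1 + j2)))^*.
Proof.
rewrite expr2 /coset_exp_sum /J !rmorph_sum /= big_distrl; apply: eq_bigr => u _ /=.
rewrite big_distrl mulr_sumr /=; apply: eq_bigr => j1 _.
rewrite mulr_sumr mulr_sumr; apply: eq_bigr => j2 _.
by rewrite mulnDr exprD rmorphM.
Qed.

Lemma count_sums_fourier : \sum_(a < d) S a * (J a)^* ^+ 2 = (d * count_sums)%:R.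
Proof.
under eq_bigr do rewrite coset_interval_exp_sum_expand.
rewrite exchange_big /= /count_sums natrM natr_sum mulr_sumr.
apply: eq_bigr => u _; rewrite exchange_big /= natr_sum mulr_sumr.
apply: eq_bigr => j1 _; rewrite exchange_big /= natr_sum mulr_sumr.
apply: eq_bigr => j2 _; rewrite prim_root_orthogonality // natrM !modn_small //.
  by apply: leq_trans T_le; rewrite mul2n -addnn -addSn leq_add // ltnW.
exact: unit_residue_lt.
Qed.

Lemma sum_multiples_orthogonality x y :
  \sum_(a < d | (d %/ L %| a)%N) z ^+ (a * x) * (z ^+ (a * y))^*
   = (L * (x == y %[mod L]))%:R.
Proof.
have DL0 : (0 < d %/ L)%N by rewrite divn_gt0 // dvdn_leq // ltnW.
rewrite -(big_mkord (fun a => d %/ L %| a)%N (fun a => z ^+ (a * x) * (z ^+ (a * y))^*)).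
rewrite -{1}(divnK L_dvd) sum_nat_dvd // big_mkord.
rewrite -(prim_root_orthogonality (dvdn_prim_root z_prim L_dvd)).
by apply: eq_bigr => b _; rewrite -!exprM !mulnA.
Qed.

Lemma fourier_main_term :
  \sum_(a < d | (d %/ L %| a)%N) S a * (J a)^* ^+ 2 = (#|H| * T ^ 2)%:R.
Proof.
under eq_bigr do rewrite coset_interval_exp_sum_expand.
transitivity (\sum_(u in (H :* c)%g) \sum_(j1 < T) ((L * k)%N%:R : algC)).
  rewrite exchange_big /=; apply: eq_bigr => u _; rewrite exchange_big /=.
  apply: eq_bigr => j1 _; rewrite exchange_big /=.
  under eq_bigr do rewrite sum_multiples_orthogonality.
  by rewrite -natr_sum -big_distrr /= sum_eq_mod_shift.
rewrite !sumr_const card_ord card_rcoset -mulrnA -(mulr_natr _ (T * #|H|)) -natrM.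
by congr (_%:R); lia.
Qed.

Lemma interval_exp_sum_parseval : \sum_(a < d) `|J a| ^+ 2 = (d * T)%:R.
Proof.
have T_le_d : (T <= d)%N by apply: leq_trans T_le; rewrite leq_pmull.
have JE a : J a = \sum_(y < d) ((y < T)%N%:R * z ^+ (a * y)).
  rewrite /J -(big_ord_narrow (F := fun i : 'I_d => z ^+ (a * i)) T_le_d) big_mkcond /=.
  by apply: eq_bigr => y _; case: ifP => _; rewrite ?mul1r ?mul0r.
have card_T : \sum_(y < d) (y < T)%N%:R = T%:R :> algC.
  rewrite -natr_sum; congr (_%:R).
  transitivity (\sum_(y < d | (y < T)%N) 1%N).
    by rewrite [RHS]big_mkcond; apply: eq_bigr => y _; case: ifP.
  by rewrite (big_ord_narrow (F := fun _ => 1%N) T_le_d) /= sum1_card card_ord.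
under eq_bigr do rewrite JE.
rewrite (prim_root_parseval z_prim (fun y => (y < T)%N%:R)) natrM -card_T.
by congr (_ * _); apply: eq_bigr => y _; case: (y < T)%N; rewrite ?normr1 ?normr0 ?expr1n ?expr0n.
Qed.

Lemma interval_exp_sum_off_main :
  \sum_(a < d | ~~ (d %/ L %| a)%N) `|J a| ^+ 2 <= (d * T)%:R - (T * T)%:R.
Proof.
have d_gt0 : (0 < d)%N by apply: ltnW.
have J0 : J 0 = T%:R.
  by rewrite /J (eq_bigr (fun _ => 1)) => [|j _]; rewrite ?sumr_const ?card_ord ?mul0n.
rewrite -interval_exp_sum_parseval.
rewrite [X in _ <= X - _](bigID (fun a : 'I_d => (d %/ L %| a)%N)) /=.
rewrite addrAC lerDr subr_ge0 (bigD1 (Ordinal d_gt0)) ?dvdn0 //= J0.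
by rewrite normr_nat natrM -expr2 lerDl sumr_ge0 // => a _; apply: exprn_ge0.
Qed.

Lemma count_sums_gt0 :
  (forall a : 'I_d, ~~ (d %/ L %| a)%N -> `|S a| * d%:R <= (#|H| * T)%:R) ->
  (0 < count_sums)%N.
Proof.
move=> S_small; have T_gt0 : (0 < T)%N by rewrite muln_gt0 k_gt0.
have d_gt0 : (0 < d)%N by apply: ltnW.
have := count_sums_fourier.
rewrite (bigID (fun a : 'I_d => (d %/ L %| a)%N)) /= fourier_main_term.
set M := (#|H| * T ^ 2)%:R; set Err := \sum_(a < d | _) _ => fourierE.
have err_le : d%:R * `|Err| <= (#|H| * T)%:R * ((d * T)%:R - (T * T)%:R).
  apply: le_trans (ler_wpM2l (ler0n _ _) (ler_norm_sum _ _ _)) _.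
  apply: le_trans _ (ler_wpM2l (ler0n _ _) interval_exp_sum_off_main).
  rewrite !mulr_sumr; apply: ler_sum => a a_off.
  rewrite normrM normrX norm_conjC mulrA; apply: ler_wpM2r; first exact: exprn_ge0.
  by rewrite mulrC S_small.
have err_lt : `|Err| < M.
  have d_pos : 0 < d%:R :> algC by rewrite ltr0n.
  rewrite -(ltr_pM2l d_pos); apply: le_lt_trans err_le _.
  rewrite /M mulrBr ltrBlDr -!natrM -natrD ltr_nat.
  have := cardG_gt0 H; nia.
have : 0 < `|M| - `|Err| by rewrite normr_nat subr_gt0.
move/lt_le_trans/(_ (lerB_normD M Err)); rewrite fourierE normr_nat ltr0n.
by rewrite muln_gt0 => /andP[].
Qed.

Lemma count_sums_gt0_small_residue :
  (0 < count_sums)%N -> exists2 u, u \in (H :* c)%g & (rho u < 2 * T)%N.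
Proof.
case: (pickP (fun u => (u \in (H :* c)%g) && (rho u < 2 * T)%N)) => [u /andP[] | none].
  by exists u.
rewrite /count_sums big1 // => u u_in; apply: big1 => j1 _; apply: big1 => j2 _.
move: (none u); rewrite u_in /= => /negbT; rewrite -leqNgt.
case: eqP => // ->; rewrite leqNgt (_ : j1 + j2 < 2 * T)%N //.
by rewrite mul2n -addnn -addSn leq_add // ltnW.
Qed.

End CountingSums.

Lemma coset_exp_sum_small n m d (H : {group {unit 'Z_d}}) c z a T :
  1 < d -> #|units_Zp d : H|%g = m -> (d.-primitive_root z)%R -> d <= 4 * n * T ->
  ~~ (d %/ gcdn d (128 * n ^ 2 * m ^ 2)`! %| a) ->
  (`|coset_exp_sum H z c a| * d%:R <= (#|H| * T)%:R)%R.
Proof.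
move=> d_gt1 H_index z_prim dT a_off; set N := 128 * n ^ 2 * m ^ 2.
have d_gt0 := ltnW d_gt1; have m_gt0 : 0 < m by rewrite -H_index indexg_gt0.
set d' := d %/ gcdn a d.
have d'_dvd : d' %| d := dvdn_div (dvdn_gcdr a d).
have d'_gt0 : 0 < d' := dvdn_gt0 d_gt0 d'_dvd.
have SE : coset_exp_sum H z c a = coset_exp_sum H (z ^+ a)%R c 1.
  by apply: eq_bigr => u _; rewrite mul1n exprM.
have S_bound := coset_exp_sum_bound H d_gt1 d'_gt0 d'_dvd (exp_prim_root z_prim a) c.
have [p p_in p_big] : exists2 p, p \in \pi(d') & N < d'`_p.
  by apply: prime_power_part_gt => //; apply: contra a_off; apply: dvdn_div_gcd_dvd.
have ker_le : #|H :&: ker_mod d d'| * totient d' <= m * #|H|.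
  have HG : H \subset units_Zp d := subsetT H.
  rewrite -H_index [X in _ <= X]mulnC (Lagrange HG) card_units_Zp // mulnC.
  apply: leq_trans (totient_mul_card_ker_mod d_gt1 d'_gt0 d'_dvd).
  by rewrite leq_mul2l subset_leq_card ?subsetIr ?orbT.
have := coset_exp_sum_small_arith m_gt0 ker_le p_big (part_totient_sq_bound d'_gt0 p_in) dT.
rewrite SE -ler_sqr ?nnegrE ?mulr_ge0 ?ler0n // exprMn -!natrX => arith.
by apply: le_trans (ler_wpM2r (ler0n _ _) S_bound) _; rewrite -natrM ler_nat.
Qed.

Theorem proposition5p1 (n g : nat) (hn : 0 < n) (hg : 0 < g) :
  exists d0 : nat, forall d : nat, d0 < d -> 1 < d ->
    forall H : {group {unit 'Z_d}},
      #|units_Zp d : H|%g = (2 * g)%N ->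
      forall C, C \in rcosets H (units_Zp d) ->
        exists2 u : {unit 'Z_d}, u \in C &
          (0 < unit_residue u) && (unit_residue u * n < d).
Proof.
set N := 128 * n ^ 2 * (2 * g) ^ 2.
exists (4 * n * N`!) => d d_big d_gt1 H H_index _ /rcosetsP[c _ ->].
set L := gcdn d N`!.
have L_gt0 : 0 < L by rewrite gcdn_gt0 ltnW.
have L_le : 2 * n * L <= d.
  have := leq_mul (leqnn n) (dvdn_leq (fact_gt0 N) (dvdn_gcdr d N`!)); lia.
have [k k_gt0 /andP[T_lo T_hi]] := exists_scale_between hn L_gt0 L_le.
have T_le : 2 * (k * L) <= d by apply: leq_trans T_lo; rewrite mulnAC leq_pmulr.
have [z z_prim] := C_prim_root_exists (ltnW d_gt1).
have S_small (a : 'I_d) : ~~ (d %/ L %| a) ->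
    (`|coset_exp_sum H z c a| * d%:R <= (#|H| * (k * L))%:R)%R.
  exact: coset_exp_sum_small d_gt1 H_index z_prim T_hi.
have := count_sums_gt0 d_gt1 L_gt0 (dvdn_gcdl d N`!) k_gt0 T_le z_prim S_small.
move/count_sums_gt0_small_residue => [u u_in u_small]; exists u => //.
by rewrite unit_residue_gt0 //=; apply: leq_trans T_lo; rewrite mulnAC ltn_pmul2r.
Qed.
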